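(* Let $f\in\Gamma_0(X)$ and let $x\in X$ be a minimizer of $f$. Then for every $M\ge 0$, \[ \partial f(x)=\bigcap_{\varepsilon>0}\overline{\operatorname{co}}\big(\partial_\varepsilon f(x)\cup \varepsilon\,\partial_{\varepsilon+M}f(x)\big)=\bigcap_{\varepsilon>0}\overline{\operatorname{co}}\big(\partial_\varepsilon f(x)\cup \varepsilon\,\partial_{\varepsilon+M}f^+(x)\big), \] where $f^+:=\max\{f,0\}$.
   Context: $X$ is a real separated (Hausdorff) locally convex space, with topological dual $X^*$ endowed with the weak$^*$ topology; closures and closed convex hulls $\overline{\operatorname{co}}$ in $X^*$ are taken in the weak$^*$ topology. $\Gamma_0(X)$ denotes the set of proper, convex, lower semicontinuous functions $X\to\mathbb{R}\cup\{+\infty\}$. For $g:X\to\overline{\mathbb{R}}$, $x\in X$ and $\varepsilon\in\mathbb{R}$, the $\varepsilon$-subdifferential is $\partial_\varepsilon g(x)=\{x^*\in X^*:\ g(y)\ge g(x)+\langle x^*,y-x\rangle-\varepsilon\ \forall y\in X\}$ if $g(x)\in\mathbb{R}$ and $\varepsilon\ge0$, and $\partial_\varepsilon g(x)=\emptyset$ otherwise; $\partial g(x):=\partial_0 g(x)$. For $\lambda\in\mathbb{R}$ and a set $A$, $\lambda A=\{\lambda a: a\in A\}$. *)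

From HB Require Import structures.
From mathcomp Require Import all_boot all_order all_algebra.
From mathcomp Require Import all_classical all_reals all_analysis.
Set Implicit Arguments. Unset Strict Implicit. Unset Printing Implicit Defensive.
Import Order.TTheory GRing.Theory Num.Theory.
Local Open Scope classical_set_scope.
Local Open Scope ring_scope.

Section Defs.
Context {R : realType} {X : tvsType R}.

Definition dual : set (X -> R) :=
  [set l | (forall (a : R) (u v : X), l (a *: u + v) = a * l u + l v)
           /\ continuous (fun y : X => (l y : R^o))].

Definition fconvex (C : set (X -> R)) : Prop :=
  forall a b (t : R), C a -> C b -> 0 <= t <= 1 ->
    C (fun y => t * a y + (1 - t) * b y).

(* weak* closedness in X^*: the weak* topology on X^* is the subspace
   topology induced by the topology of pointwise convergence {ptws X -> R} *)
Definition wstar_closed (C : set (X -> R)) : Prop :=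
  @closure {ptws X -> R^o} C `&` dual `<=` C.

Definition wclco (A : set (X -> R)) : set (X -> R) :=
  [set l | dual l /\ forall C, A `<=` C -> C `<=` dual -> fconvex C ->
                      wstar_closed C -> C l].

Definition fscale (r : R) (A : set (X -> R)) : set (X -> R) :=
  [set (fun y => r * a y) | a in A].

Local Open Scope ereal_scope.

Definition esubdiff (g : X -> \bar R) (x : X) (e : R) : set (X -> R) :=
  [set l | dual l /\ g x \is a fin_num /\ (0 <= e)%R /\
           forall y, g x + (l (y - x)%R - e)%:E <= g y].

Definition subdiff (g : X -> \bar R) (x : X) := esubdiff g x 0.

Definition proper_fun (g : X -> \bar R) : Prop :=
  (forall y, g y != -oo) /\ exists y, g y \is a fin_num.

Definition econvex (g : X -> \bar R) : Prop :=
  forall (x y : X) (t : R), (0 < t < 1)%R ->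
    g (t *: x + (1 - t) *: y)%R <= t%:E * g x + (1 - t)%:E * g y.

Definition Gamma0 (g : X -> \bar R) : Prop :=
  proper_fun g /\ econvex g /\ lower_semicontinuous g.

Definition fplus (g : X -> \bar R) : X -> \bar R := fun y => maxe (g y) 0.

End Defs.

(* Let f be proper with a minimizer x and g any function that is finite wherever f is
   (in the theorem g is f itself or f^+ = max f 0), and let M >= 0.  Write
     S_e := cl-co( ∂_e f(x) ∪ e ∂_{e+M} g(x) )   (weak* closed convex hull).
   - [⊆]  ∂f(x) ⊆ ∂_e f(x) ⊆ S_e for every e > 0.
   - [⊇]  Let l lie in every S_e and let y be a point with f y finite; put v := y - x.
     Every generator m of S_e satisfies m v <= f y - f x + e K for 0 < e <= 1, with a
     constant K depending only on y: for m in ∂_e f(x) this is the defining inequality,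
     and for m = e n with n in ∂_{e+M} g(x) we get e n v <= e K <= f y - f x + e K,
     where the last step is exactly the minimality of x.  The set of dual elements
     with m v <= c is a weak*-closed convex half-space, so it contains S_e, hence l;
     letting e go to 0 yields l v <= f y - f x, i.e. l ∈ ∂f(x). *)
From HB Require Import structures.
From mathcomp Require Import all_boot all_order all_algebra.
From mathcomp Require Import all_classical all_reals all_analysis.
From mathcomp Require Import lra.
Set Implicit Arguments. Unset Strict Implicit. Unset Printing Implicit Defensive.
Import Order.TTheory GRing.Theory Num.Theory.
Local Open Scope classical_set_scope.
Local Open Scope ring_scope.

Lemma le_of_le_add_small (R : realFieldType) (u D K : R) : 0 < K ->
  (forall e, 0 < e -> e <= 1 -> u <= D + e * K) -> u <= D.
Proof.
move=> K0 small; apply/ler_addgt0Pr => eps eps0.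
set e := Num.min 1 (eps / K).
have e0 : 0 < e by rewrite lt_min ltr01 divr_gt0.
have e1 : e <= 1 by rewrite ge_min lexx.
apply: (le_trans (small e e0 e1)); rewrite lerD2l.
have : e <= eps / K by rewrite ge_min lexx orbT.
by rewrite -(ler_pM2r K0) divfK ?gt_eqF.
Qed.

Section DualHalfspaces.
Context {R : realType} {X : tvsType R}.

Lemma dual_scale (a : X -> R) (t : R) : dual a -> dual (fun y => t * a y).
Proof.
move=> [lin cont]; split=> [r u v|y]; first by rewrite lin mulrDr mulrCA.
exact: (@continuousZl_tmp R R^o X a t y (cont y)).
Qed.

Lemma dual_comb (a b : X -> R) (t : R) : dual a -> dual b ->
  dual (fun y => t * a y + (1 - t) * b y).
Proof.
move=> da db; have [lina conta] := dual_scale t da.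
have [linb contb] := dual_scale (1 - t) db.
split=> [r u v|y]; first by rewrite lina linb mulrDr addrACA.
exact: (@continuousD R R^o X _ _ y (conta y) (contb y)).
Qed.

Definition halfspace (v : X) (c : R) : set (X -> R) :=
  [set m | dual m /\ m v <= c].

Lemma halfspace_fconvex (v : X) (c : R) : fconvex (halfspace v c).
Proof.
move=> a b t [da av] [db bv] /andP[t0 t1]; split; first exact: dual_comb.
by rewrite /=; nra.
Qed.

(* Evaluation at v is continuous for the pointwise topology, so half-spaces are
   weak* closed. *)
Lemma halfspace_wstar_closed (v : X) (c : R) : wstar_closed (halfspace v c).
Proof.
move=> m [clm dm]; split=> //.
have closed_le_c : closed [set m : {ptws X -> R^o} | m v <= c].
  apply: (@preimage_closed {ptws X -> R^o} R^o (fun m => m v) [set r | r <= c]).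
    by move=> g _; exact: (@proj_continuous X (fun _ => R^o) v g).
  exact: closed_le.
have : closure [set m : {ptws X -> R^o} | m v <= c] m.
  by apply: (closureS _ clm) => g [].
by rewrite -(closure_id _).1.
Qed.

Lemma wclco_halfspace (A : set (X -> R)) (v : X) (c : R) :
  A `<=` halfspace v c -> wclco A `<=` halfspace v c.
Proof.
move=> Ahalf m [_ hull]; apply: hull => //; last exact: halfspace_wstar_closed.
- by move=> n [].
- exact: halfspace_fconvex.
Qed.

Lemma subset_wclco (A : set (X -> R)) (m : X -> R) : dual m -> A m -> wclco A m.
Proof. by move=> dm Am; split=> // C AsubC _ _ _; exact: AsubC. Qed.

End DualHalfspaces.

Section EpsilonSubdifferentials.
Context {R : realType} {X : tvsType R}.
Local Open Scope ereal_scope.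

Lemma esubdiff_le (g : X -> \bar R) (x : X) (e e' : R) : (e <= e')%R ->
  esubdiff g x e `<=` esubdiff g x e'.
Proof.
move=> ee' m [dm [gx [e0 ineq]]]; split=> //; split=> //.
split=> [|y]; first exact: le_trans ee'.
apply: le_trans (ineq y); rewrite -(fineK gx) -!EFinD lee_fin; lra.
Qed.

Lemma esubdiff_ineq (g : X -> \bar R) (x y : X) (e : R) (m : X -> R) :
  esubdiff g x e m -> g y \is a fin_num ->
  (m (y - x) <= fine (g y) - fine (g x) + e)%R.
Proof.
move=> [_ [gx [_ ineq]]] gy; have := ineq y.
by rewrite -(fineK gx) -(fineK gy) -EFinD lee_fin; lra.
Qed.

Lemma subdiff_sub_hulls (f g : X -> \bar R) (x : X) (M : R) :
  subdiff f x `<=` [set l | forall e : R, (0 < e)%R ->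
     wclco (esubdiff f x e `|` fscale e (esubdiff g x (e + M))) l].
Proof.
move=> l lsub e e0; apply: subset_wclco; first by case: lsub.
by left; apply: esubdiff_le lsub; exact: ltW.
Qed.

Section Minimizer.
Variables (f g : X -> \bar R) (x : X) (M : R).
Hypothesis fx_fin : f x \is a fin_num.
Hypothesis x_min : forall y, f x <= f y.
Hypothesis g_fin : forall y, f y \is a fin_num -> g y \is a fin_num.
Hypothesis M_ge0 : (0 <= M)%R.

(* A bound, valid for 0 < e <= 1, on n (y - x) for n in the (e + M)-subdifferential
   of g at x; it is at least 1. *)
Let K (y : X) : R := (1 + `|fine (g y) - fine (g x)| + 1 + M)%R.

Let K_ge1 (y : X) : (1 <= K y)%R.
Proof.
by have := normr_ge0 (fine (g y) - fine (g x))%R; have := M_ge0; rewrite /K => ? ?; lra.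
Qed.

(* For f y finite and 0 < e <= 1, every generator of the e-th hull lies in the
   half-space {m | m (y - x) <= f y - f x + e K y}; the second kind of generator
   needs f x <= f y. *)
Lemma generators_in_halfspace (y : X) (e : R) : f y \is a fin_num ->
  (0 < e <= 1)%R ->
  esubdiff f x e `|` fscale e (esubdiff g x (e + M)) `<=`
    halfspace (y - x)%R (fine (f y) - fine (f x) + e * K y)%R.
Proof.
move=> fy /andP[e0 e1] m [fm|[n gn <-]].
  split; first by case: fm.
  have m_bound := esubdiff_ineq fm fy.
  have := ler_peMr (ltW e0) (K_ge1 y).
  by rewrite /=; lra.
split; first by apply: dual_scale; case: gn.
have fx_le_fy : (fine (f x) <= fine (f y))%R by rewrite fine_le.
have n_bound : (n (y - x) <= K y)%R.
  have n_ineq := esubdiff_ineq gn (g_fin fy).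
  have := ler_norm (fine (g y) - fine (g x))%R; rewrite /K => ?; lra.
have : (e * n (y - x) <= e * K y)%R by rewrite ler_pM2l.
rewrite /=; lra.
Qed.

Lemma hulls_sub_subdiff :
  [set l | forall e : R, (0 < e)%R ->
     wclco (esubdiff f x e `|` fscale e (esubdiff g x (e + M))) l]
  `<=` subdiff f x.
Proof.
move=> l lhulls; have dl : dual l by have [] := lhulls 1%R ltr01.
split=> //; split=> //; split=> // y.
have [fy|fy_inf] := boolP (f y \is a fin_num); last first.
  (* f y >= f x > -oo, so a non-finite f y is +oo *)
  have : f y != -oo by rewrite -ltNye (lt_le_trans _ (x_min y)) // ltNye_eq fx_fin.
  by move: fy_inf; rewrite fin_numE negb_and !negbK => /orP[->|/eqP->]; rewrite ?leey.
rewrite -(fineK fx_fin) -(fineK fy) -EFinD lee_fin subr0.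
suff : (l (y - x) <= fine (f y) - fine (f x))%R by lra.
apply: (@le_of_le_add_small _ _ _ (K y)); first by have := K_ge1 y; lra.
move=> e e0 e1; have [] // := wclco_halfspace (generators_in_halfspace fy _) (lhulls e e0).
by rewrite e0 e1.
Qed.

End Minimizer.

Lemma minimizer_fin_num (f : X -> \bar R) (x : X) :
  proper_fun f -> (forall y, f x <= f y) -> f x \is a fin_num.
Proof.
move=> [noninf [y0 fy0]] x_min; rewrite fin_numE noninf /=.
apply: contraTN fy0 => /eqP fx; have := x_min y0.
by rewrite fx leye_eq => /eqP ->.
Qed.

Lemma fplus_fin_num (f : X -> \bar R) (y : X) :
  f y \is a fin_num -> fplus f y \is a fin_num.
Proof. by move=> fy; rewrite /fplus maxEle; case: ifP. Qed.

End EpsilonSubdifferentials.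

Theorem lemma1 (R : realType) (X : tvsType R) (f : X -> \bar R) (x : X) :
  hausdorff_space X ->
  Gamma0 f ->
  (forall y, (f x <= f y)%E) ->
  forall M : R, 0 <= M ->
    subdiff f x =
      [set l | forall e : R, 0 < e ->
         wclco (esubdiff f x e `|` fscale e (esubdiff f x (e + M))) l]
    /\
    [set l | forall e : R, 0 < e ->
       wclco (esubdiff f x e `|` fscale e (esubdiff f x (e + M))) l] =
      [set l | forall e : R, 0 < e ->
         wclco (esubdiff f x e `|` fscale e (esubdiff (fplus f) x (e + M))) l].
Proof.
move=> _ [f_proper _] x_min M M0.
have fx_fin := minimizer_fin_num f_proper x_min.
have with_f : subdiff f x = [set l | forall e : R, 0 < e ->
    wclco (esubdiff f x e `|` fscale e (esubdiff f x (e + M))) l].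
  apply/seteqP; split; first exact: subdiff_sub_hulls.
  exact: hulls_sub_subdiff.
have with_fplus : subdiff f x = [set l | forall e : R, 0 < e ->
    wclco (esubdiff f x e `|` fscale e (esubdiff (fplus f) x (e + M))) l].
  apply/seteqP; split; first exact: subdiff_sub_hulls.
  by apply: hulls_sub_subdiff => // y; exact: fplus_fin_num.
by split; rewrite -with_f.
Qed.
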